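(* Let $X$ be a Banach lattice with order continuous norm and let $(S_\lambda)_{\lambda\in\Lambda}$ be a family of convex monotone semigroups on $X$ such that $\{S_\lambda(t)x:\lambda\in\Lambda\}$ is bounded above for all $x\in X$ and $t>0$. Assume that for every $t\ge 0$ there is a bounded operator $C(t)\colon X\to X$ with $J_\pi x\le C(t)x$ for all $\pi\in P_t$ and $x\in X$. Then the semigroup envelope $S=(S(t))_{t\ge0}$ of $(S_\lambda)_{\lambda\in\Lambda}$ exists, is a convex monotone semigroup, and is given by $S(t)x=\sup_{\pi\in P_t}J_\pi x$ for all $t\ge0$, $x\in X$. If moreover $C(t)x\to x$ as $t\downarrow 0$ for all $x\in X$ and $S_{\lambda_0}$ is a $C_0$-semigroup for some $\lambda_0\in\Lambda$, then $S$ is a $C_0$-semigroup. Moreover, if $S_\lambda$ is sublinear for all $\lambda\in\Lambda$, then $S$ is sublinear.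
   Context: A Banach lattice $X$ has order continuous norm if $\|x_\alpha\|\to 0$ for every net $x_\alpha\downarrow 0$ (then every nonempty subset bounded above has a supremum). An operator $T\colon X\to X$ is convex if $T(\lambda x+(1-\lambda)y)\le\lambda Tx+(1-\lambda)Ty$, monotone if $x\le y\Rightarrow Tx\le Ty$, positive homogeneous if $T(\lambda x)=\lambda Tx$ for $\lambda>0$, sublinear if convex and positive homogeneous, bounded if $\sup_{\|x\|\le r}\|Tx\|<\infty$ for all $r>0$. A semigroup on $X$ is a family $(S(t))_{t\ge0}$ of bounded operators $X\to X$ with $S(0)=\mathrm{id}$ and $S(t+s)=S(t)S(s)$; it is a $C_0$-semigroup if additionally $S(t)x\to x$ as $t\downarrow0$ for all $x$; it is convex/monotone/sublinear if every $S(t)$ is. For semigroups $S,T$ write $S\le T$ if $S(t)x\le T(t)x$ for all $t,x$. A semigroup $S$ is an upper bound of $(S_\lambda)$ if $S\ge S_\lambda$ for all $\lambda$, and the (upper) semigroup envelope is the smallest upper bound. Let $P$ be the set of finite sets $\pi\subset[0,\infty)$ with $0\in\pi$, and $P_t:=\{\pi\in P:\max\pi=t\}$. Define $J_hx:=\sup_{\lambda\in\Lambda}S_\lambda(h)x$ for $h>0$ (and $J_0=\mathrm{id}$), and for $\pi=\{t_0,\dots,t_m\}$ with $0=t_0<t_1<\dots<t_m$, $J_\pi x:=J_{t_1-t_0}\cdots J_{t_m-t_{m-1}}x$ ($J_{\{0\}}=\mathrm{id}$). *)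

From HB Require Import structures.
From mathcomp Require Import all_boot all_order all_algebra.
From mathcomp Require Import all_classical all_reals all_analysis.
Set Implicit Arguments. Unset Strict Implicit. Unset Printing Implicit Defensive.
Import Order.TTheory GRing.Theory Num.Theory.
Import numFieldNormedType.Exports.
Local Open Scope classical_set_scope.
Local Open Scope ring_scope.

Record banach_lattice (R : realType) (X : completeNormedModType R) := BanachLattice {
  ble : X -> X -> Prop;
  ble_refl : forall x, ble x x;
  ble_trans : forall x y z, ble x y -> ble y z -> ble x z;
  ble_anti : forall x y, ble x y -> ble y x -> x = y;
  ble_add : forall x y z, ble x y -> ble (x + z) (y + z);
  ble_scale : forall (a : R) x y, 0 <= a -> ble x y -> ble (a *: x) (a *: y);
  bjoin : X -> X -> X;
  bjoin_ubl : forall x y, ble x (bjoin x y);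
  bjoin_ubr : forall x y, ble y (bjoin x y);
  bjoin_least : forall x y z, ble x z -> ble y z -> ble (bjoin x y) z;
  (* lattice norm: |x| <= |y| implies ||x|| <= ||y||, with |x| = x v (-x) *)
  bnorm_mono : forall x y, ble (bjoin x (- x)) (bjoin y (- y)) -> `|x| <= `|y|
}.

Section BL.
Context {R : realType} {X : completeNormedModType R} (L : banach_lattice X).
Local Notation "x <=L y" := (ble L x y) (at level 70).

Definition is_ub (A : set X) (u : X) := forall a, A a -> a <=L u.
Definition bounded_above (A : set X) := exists u, is_ub A u.
Definition is_sup (A : set X) (s : X) :=
  is_ub A s /\ forall u, is_ub A u -> s <=L u.
Definition is_inf (A : set X) (s : X) :=
  (forall a, A a -> s <=L a) /\ forall u, (forall a, A a -> u <=L a) -> u <=L s.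

(* the supremum of A (chosen; meaningful when it exists, it is then unique) *)
Definition lsup (A : set X) : X := xget 0 [set s | is_sup A s].

Definition order_continuous := forall (I : Type) (ileq : I -> I -> Prop) (x : I -> X),
  (forall i, ileq i i) -> (forall i j k, ileq i j -> ileq j k -> ileq i k) ->
  inhabited I -> (forall i j, exists k, ileq i k /\ ileq j k) ->
  (forall i j, ileq i j -> x j <=L x i) ->
  is_inf (range x) 0 ->
  forall e : R, 0 < e -> exists i0, forall i, ileq i0 i -> `|x i| < e.

Definition bounded_op (T : X -> X) :=
  forall r : R, 0 < r -> exists M : R, forall x, `|x| <= r -> `|T x| <= M.
Definition convex_op (T : X -> X) := forall (l : R) x y, 0 <= l <= 1 ->
  T (l *: x + (1 - l) *: y) <=L l *: T x + (1 - l) *: T y.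
Definition monotone_op (T : X -> X) := forall x y, x <=L y -> T x <=L T y.
Definition poshom_op (T : X -> X) := forall (l : R) x, 0 < l -> T (l *: x) = l *: T x.
Definition sublinear_op (T : X -> X) := convex_op T /\ poshom_op T.

(* semigroups: families S : R -> X -> X, only t >= 0 matters *)
Definition semigroup (S : R -> X -> X) :=
  (forall t, 0 <= t -> bounded_op (S t)) /\ (forall x, S 0 x = x) /\
  (forall t s x, 0 <= t -> 0 <= s -> S (t + s) x = S t (S s x)).
Definition C0_semigroup (S : R -> X -> X) :=
  semigroup S /\ forall x, (fun t => S t x) @ 0^'+ --> x.
Definition convex_sg (S : R -> X -> X) := forall t, 0 <= t -> convex_op (S t).
Definition monotone_sg (S : R -> X -> X) := forall t, 0 <= t -> monotone_op (S t).
Definition sublinear_sg (S : R -> X -> X) := forall t, 0 <= t -> sublinear_op (S t).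
Definition sg_le (S T : R -> X -> X) := forall t x, 0 <= t -> S t x <=L T t x.

Definition is_upper_bound {Lam : Type} (Sl : Lam -> R -> X -> X) (S : R -> X -> X) :=
  semigroup S /\ forall l, sg_le (Sl l) S.
Definition is_envelope {Lam : Type} (Sl : Lam -> R -> X -> X) (S : R -> X -> X) :=
  is_upper_bound Sl S /\ forall T, is_upper_bound Sl T -> sg_le S T.

Definition Jop {Lam : Type} (Sl : Lam -> R -> X -> X) (h : R) (x : X) : X :=
  if h == 0 then x else lsup [set Sl l h x | l in [set: Lam]].

(* A partition pi = {0 = t_0 < t_1 < ... < t_m} in P is encoded by the
   sequence [:: t_1; ...; t_m] (strictly increasing, all > 0).
   J_pi x = J_{t1 - t0} ... J_{tm - t(m-1)} x. *)
Fixpoint Jseq {Lam : Type} (Sl : Lam -> R -> X -> X) (prev : R) (s : seq R) (x : X) : X :=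
  match s with
  | [::] => x
  | t :: s' => Jop Sl (t - prev) (Jseq Sl t s' x)
  end.
Definition Jpart {Lam : Type} (Sl : Lam -> R -> X -> X) (s : seq R) (x : X) : X :=
  Jseq Sl 0 s x.
Definition in_Pt (t : R) (s : seq R) := sorted <%R (0 :: s) /\ last 0 s = t.

End BL.

(* Order continuity makes X Dedekind complete: for a directed set bounded above,
   the gaps y - a between upper bounds and elements decrease to 0, so they become
   small in norm and the elements form a Cauchy net.  Hence J_h x exists and so
   does S(t)x := sup_pi J_pi x, as all J_pi x are dominated by C(t)x.  Since
   J_(a+b) <= J_a J_b, refining a partition can only increase J_pi x, so the
   family (J_pi x)_pi is upward directed; cutting partitions of [0, t + s] at t
   gives S(t + s) <= S(t) S(s).  For the converse, a convex bounded operator T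
   satisfies T (sup Y) <= sup T(Y) on directed sets Y: by order continuity some
   a in Y is close to sup Y in norm, and convexity bounds T (sup Y) by T a plus a
   small error.  Any upper bound semigroup dominates every J_pi and hence S, and
   strong continuity follows from S_l0(t)x <= S(t)x <= C(t)x. *)

Set Warnings "-notation-overridden,-ambiguous-paths,-notation-incompatible-prefix".
Set Implicit Arguments. Unset Strict Implicit. Unset Printing Implicit Defensive.
From HB Require Import structures.
From mathcomp Require Import all_boot all_order all_algebra.
From mathcomp Require Import all_classical all_reals all_analysis.
From mathcomp Require Import lra.
Import Order.TTheory GRing.Theory Num.Theory.
Import numFieldNormedType.Exports.
Local Open Scope classical_set_scope.
Local Open Scope ring_scope.

Section BanachLatticeOrder.
Context {R : realType} {X : completeNormedModType R}.
Variable L : banach_lattice X.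
Local Notation "x <=L y" := (ble L x y) (at level 70).

Lemma ble_addl x y z : x <=L y -> z + x <=L z + y.
Proof. by move=> h; rewrite ![z + _]addrC; apply: ble_add. Qed.

Lemma bleD a b c d : a <=L b -> c <=L d -> a + c <=L b + d.
Proof. by move=> h1 h2; apply: ble_trans (ble_add _ h1) (ble_addl _ h2). Qed.

Lemma ble_subr_ge0 x y : 0 <=L y - x <-> x <=L y.
Proof.
split=> h; last by rewrite -(subrr x); apply: ble_add.
by have := ble_add x h; rewrite add0r subrK.
Qed.

Lemma bleN x y : x <=L y -> - y <=L - x.
Proof.
move=> h; have := ble_add (- x - y) h.
by rewrite addrA subrr add0r addrCA subrr addr0.
Qed.

Lemma bleN0 x : 0 <=L x -> - x <=L 0.
Proof. by move/bleN; rewrite oppr0. Qed.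

Lemma ble_pscaleV (a : R) x u : 0 < a -> x <=L a^-1 *: u <-> a *: x <=L u.
Proof.
move=> a0; have aV0 : 0 <= a^-1 by rewrite invr_ge0 ltW.
split=> h.
  by have := ble_scale (ltW a0) h; rewrite scalerA mulfV ?gt_eqF // scale1r.
by have := ble_scale aV0 h; rewrite scalerA mulVf ?gt_eqF // scale1r.
Qed.

Definition babs x := bjoin L x (- x).

Lemma ble_babs x : x <=L babs x. Proof. exact: bjoin_ubl. Qed.

Lemma bleN_babs x : - x <=L babs x. Proof. exact: bjoin_ubr. Qed.

Lemma babs_ge0 x : 0 <=L babs x.
Proof.
have : 0 <=L 2%:R *: babs x.
  by rewrite scaler_nat mulr2n -(subrr x); apply: bleD; [apply: ble_babs|apply: bleN_babs].
have half_ge0 : (0 : R) <= 2^-1 by rewrite invr_ge0 ler0n.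
move/(ble_scale half_ge0).
by rewrite scaler0 scalerA mulVf ?pnatr_eq0 // scale1r.
Qed.

Lemma ble_norm x y : 0 <=L x -> x <=L y -> `|x| <= `|y|.
Proof.
move=> x0 xy; have y_babs := ble_trans xy (ble_babs y).
apply: bnorm_mono; apply: bjoin_least; first exact: y_babs.
exact: ble_trans (bleN0 x0) (ble_trans x0 y_babs).
Qed.

Lemma norm_babs x : `|babs x| <= `|x|.
Proof.
apply: bnorm_mono; apply: bjoin_least; first exact: ble_refl.
exact: ble_trans (bleN0 (babs_ge0 x)) (babs_ge0 x).
Qed.

Lemma norm_ble_between a b c : a <=L b -> b <=L c -> `|b| <= `|a| + `|c|.
Proof.
move=> ab bc.
have le_sum y z : 0 <=L z -> y <=L y + z by move=> z0; have := ble_addl y z0; rewrite addr0.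
have : `|b| <= `|babs a + babs c|.
  apply: bnorm_mono; apply: bjoin_least.
    apply: ble_trans bc (ble_trans (ble_babs c) (ble_trans _ (ble_babs _))).
    by rewrite addrC; apply: le_sum; apply: babs_ge0.
  apply: ble_trans (bleN ab) (ble_trans (bleN_babs a) (ble_trans _ (ble_babs _))).
  by apply: le_sum; apply: babs_ge0.
move/le_trans; apply; apply: le_trans (ler_normD _ _) _.
by apply: lerD; apply: norm_babs.
Qed.

(* The hypothesis bounds the norm of the positive part [(p - q) v 0] by every
   [e > 0], so that positive part vanishes. *)
Lemma ble_approx p q :
  (forall e : R, 0 < e -> exists d, `|d| < e /\ p <=L q + d) -> p <=L q.
Proof.
move=> small; set z := bjoin L (p - q) 0.
have z0 : 0 <=L z by apply: bjoin_ubr.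
have z_eq0 : z = 0.
  apply/eqP; rewrite -normr_eq0 eq_le normr_ge0 andbT leNgt; apply/negP => zp.
  have [d [dz hd]] := small _ zp.
  have : z <=L babs d.
    apply: bjoin_least; last exact: babs_ge0.
    apply: ble_trans (ble_babs d); have := ble_add (- q) hd.
    by rewrite addrAC subrr add0r.
  move=> /(ble_norm z0) /le_trans /(_ (norm_babs d)) /(lt_le_trans dz).
  by rewrite ltxx.
apply/ble_subr_ge0; have := bleN (bjoin_ubl L (p - q) 0).
by rewrite -/z z_eq0 oppr0 opprB.
Qed.

Lemma ble_archimedean u w : (forall n : nat, n%:R *: u <=L w) -> u <=L 0.
Proof.
move=> nu_le; apply: ble_approx => e e0.
have w0 : 0 <=L w by have := nu_le 0%N; rewrite scale0r.
set n := (Num.Def.archi_bound (`|w| / e)).+1.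
have n0 : (0 : R) < n%:R by rewrite ltr0n.
exists (n%:R^-1 *: w); split.
  rewrite normrZ ger0_norm; last by rewrite invr_ge0 ltW.
  rewrite mulrC ltr_pdivrMr // mulrC -ltr_pdivrMr //; apply: lt_le_trans (archi_boundP _) _.
    by rewrite divr_ge0 // ltW.
  by rewrite ler_nat.
by rewrite add0r; apply/ble_pscaleV.
Qed.

Definition upward_directed (Y : set X) :=
  forall a b, Y a -> Y b -> exists c, [/\ Y c, a <=L c & b <=L c].

Lemma sup_unique (A : set X) s s' : is_sup L A s -> is_sup L A s' -> s = s'.
Proof. by move=> [u1 l1] [u2 l2]; apply: ble_anti; [apply: l1|apply: l2]. Qed.

Lemma lsupE (A : set X) s : is_sup L A s -> lsup L A = s.
Proof. by move=> sup_s; apply: xget_unique => // s' /sup_unique; apply. Qed.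

Lemma bounded_op_between (T A B : X -> X) : bounded_op A -> bounded_op B ->
  (forall x, A x <=L T x) -> (forall x, T x <=L B x) -> bounded_op T.
Proof.
move=> bA bB AT TB r r0; have [M1 h1] := bA r r0; have [M2 h2] := bB r r0.
exists (M1 + M2) => x xr; apply: le_trans (norm_ble_between (AT x) (TB x)) _.
by apply: lerD; [apply: h1|apply: h2].
Qed.

End BanachLatticeOrder.

Section OrderContinuity.
Context {R : realType} {X : completeNormedModType R}.
Variable L : banach_lattice X.
Local Notation "x <=L y" := (ble L x y) (at level 70).
Hypothesis oc : order_continuous L.

(* Order continuity applied to the net [y - a], indexed by the upper bounds [y]
   (decreasing) and the elements [a] of [A] (increasing), which decreases to [0]. *)
Lemma ub_approaches (A : set X) a0 y0 : A a0 -> is_ub L A y0 -> upward_directed L A ->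
  forall e : R, 0 < e -> exists y a, [/\ is_ub L A y, A a & `|y - a| < e].
Proof.
move=> Aa0 ub_y0 dirA e e0.
pose Pairs := {p : X * X | is_ub L A p.1 /\ A p.2}.
pose ileq (i j : Pairs) := (sval j).1 <=L (sval i).1 /\ (sval i).2 <=L (sval j).2.
pose gap (i : Pairs) := (sval i).1 - (sval i).2.
have pairs_directed i j : exists k, ileq i k /\ ileq j k.
  case: i j => [[y a] [uy Aa]] [[y' a'] [uy' Aa']].
  have [c [Ac ac a'c]] := dirA a a' Aa Aa'.
  pose m := - bjoin L (- y) (- y').
  have my : m <=L y by rewrite -[y]opprK; apply/bleN/bjoin_ubl.
  have my' : m <=L y' by rewrite -[y']opprK; apply/bleN/bjoin_ubr.
  have um : is_ub L A m.
    move=> b Ab; rewrite -[b]opprK; apply: bleN.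
    by apply: bjoin_least; apply: bleN; [apply: uy|apply: uy'].
  by exists (exist _ (m, c) (conj um Ac)).
have gap_inf0 : is_inf L (range gap) 0.
  split; first by move=> _ [[[y a] [uy Aa]] _ <-]; apply/ble_subr_ge0/uy.
  move=> u le_u.
  have ub_n n : is_ub L A (y0 - n%:R *: u).
    elim: n => [|n IH]; first by rewrite scale0r subr0.
    move=> b Ab; have := le_u _ (ex_intro2 _ _ (exist _ (_, b) (conj IH Ab)) I erefl).
    move/(ble_add (b - u)); rewrite [u + _]addrC subrK addrA subrK.
    by rewrite -natr1 scalerDl scale1r opprD addrA.
  apply: (@ble_archimedean _ _ L _ (y0 - a0)) => n; apply/ble_subr_ge0.
  by rewrite addrAC; apply/ble_subr_ge0/ub_n.
have [[[y a] [uy Aa]] small] := @oc Pairs ileq gap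
  (fun i => conj (ble_refl L _) (ble_refl L _))
  (fun i j k '(conj h1 h2) '(conj h3 h4) => conj (ble_trans h3 h1) (ble_trans h2 h4))
  (inhabits (exist _ (y0, a0) (conj ub_y0 Aa0))) pairs_directed
  (fun i j '(conj h1 h2) => bleD h1 (bleN h2)) gap_inf0 e e0.
exists y, a; split=> //.
by apply: (small (exist _ (y, a) (conj uy Aa))); split; apply: ble_refl.
Qed.

(* The tails of [A] form a Cauchy filter, whose limit is the supremum. *)
Lemma directed_sup_exists (A : set X) :
  (exists a, A a) -> bounded_above L A -> upward_directed L A -> exists s, is_sup L A s.
Proof.
move=> [a0 Aa0] [y0 ub_y0] dirA.
pose tail a := [set c | A c /\ a <=L c].
pose F := filter_from A tail.
have F_proper : ProperFilter F.
  apply: filter_from_proper => [|a Aa]; last by exists a; split=> //; apply: ble_refl.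
  apply: filter_from_filter => [|a b Aa Ab]; first by exists a0.
  have [c [Ac ac bc]] := dirA a b Aa Ab.
  by exists c => // d [Ad cd]; split; split=> //; apply: ble_trans cd.
have F_cauchy : cauchy F.
  apply/cauchy_ballP => e e0.
  have e2 : 0 < e / 2 by rewrite divr_gt0.
  have [y [a [ub_y Aa ya]]] := ub_approaches Aa0 ub_y0 dirA e2.
  have near_y b : tail a b -> `|y - b| < e / 2.
    move=> [Ab ab]; apply: le_lt_trans ya.
    by apply: ble_norm; [apply/ble_subr_ge0/ub_y|apply: ble_addl; apply: bleN].
  exists (tail a, tail a); first by split; exists a.
  move=> [b c] [/near_y yb /near_y yc]; rewrite -ball_normE /ball_ /=.
  rewrite -(subrKA y) -opprB addrC; apply: le_lt_trans (ler_normB _ _) _.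
  by rewrite (splitr e); apply: ltrD.
have F_lim : F --> lim F by apply/cauchy_cvgP.
exists (lim F); split=> [a Aa|u ub_u]; apply: ble_approx => e e0;
  have [a1 Aa1 tail_near] := fcvg_ball F_lim e0.
- have [c [Ac ac a1c]] := dirA a a1 Aa Aa1.
  have := tail_near c (conj Ac a1c); rewrite -ball_normE /ball_ /= => near_c.
  exists (c - lim F); split; first by rewrite -normrN opprB.
  by rewrite subrKC.
- have := tail_near a1 (conj Aa1 (ble_refl L a1)); rewrite -ball_normE /ball_ /=.
  move=> near_a1; exists (lim F - a1); split=> //.
  by have := ble_add (lim F - a1) (ub_u a1 Aa1); rewrite subrKC.
Qed.

Inductive join_closure (A : set X) : set X :=
| join_closure_in a : A a -> join_closure A a
| join_closure_join a b :
    join_closure A a -> join_closure A b -> join_closure A (bjoin L a b).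

Lemma sup_exists (A : set X) :
  (exists a, A a) -> bounded_above L A -> exists s, is_sup L A s.
Proof.
move=> [a0 Aa0] [y0 ub_y0].
have ub_closure y : is_ub L A y -> is_ub L (join_closure A) y.
  by move=> ub_y c; elim=> [a /ub_y //|a b _ ay _ by_]; apply: bjoin_least.
have [|||s [ub_s least_s]] := @directed_sup_exists (join_closure A).
- by exists a0; apply: join_closure_in.
- by exists y0; apply: ub_closure.
- move=> a b Aa Ab; exists (bjoin L a b).
  by split; [apply: join_closure_join|apply: bjoin_ubl|apply: bjoin_ubr].
exists s; split=> [a Aa|u /ub_closure]; last exact: least_s.
by apply: ub_s; apply: join_closure_in.
Qed.

Lemma lsupP (A : set X) :
  (exists a, A a) -> bounded_above L A -> is_sup L A (lsup L A).
Proof. by move=> neA bA; have [s sup_s] := sup_exists neA bA; rewrite (lsupE sup_s). Qed.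

Lemma directed_sup_approx (Y : set X) y : (exists a, Y a) -> upward_directed L Y ->
  is_sup L Y y -> forall e : R, 0 < e -> exists2 a, Y a & `|y - a| < e.
Proof.
move=> [a0 Ya0] dirY [ub_y least_y] e e0.
pose Elt := {a | Y a}.
pose gap (i : Elt) := y - sval i.
have gap_inf0 : is_inf L (range gap) 0.
  split=> [_ [[a Ya] _ <-]|u le_u]; first exact/ble_subr_ge0/ub_y.
  have : y <=L y - u.
    apply: least_y => a Ya; apply/ble_subr_ge0; rewrite addrAC.
    exact/ble_subr_ge0/(le_u _ (ex_intro2 _ _ (exist _ a Ya) I erefl)).
  by move/ble_subr_ge0; rewrite addrAC subrr add0r => /bleN; rewrite opprK oppr0.
have elt_directed (i j : Elt) : exists k : Elt, sval i <=L sval k /\ sval j <=L sval k.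
  have [c [Yc ic jc]] := dirY _ _ (svalP i) (svalP j).
  by exists (exist _ c Yc).
have [[a Ya] small] := @oc Elt (fun i j => sval i <=L sval j) gap
  (fun i => ble_refl L _) (fun i j k => @ble_trans _ _ L _ _ _)
  (inhabits (exist _ a0 Ya0)) elt_directed
  (fun i j ij => ble_addl y (bleN ij)) gap_inf0 e e0.
by exists a => //; apply: (small (exist _ a Ya)); apply: ble_refl.
Qed.

End OrderContinuity.

Section ConvexOperators.
Context {R : realType} {X : completeNormedModType R}.
Variable L : banach_lattice X.
Local Notation "x <=L y" := (ble L x y) (at level 70).

(* Write [y = (1 - d) a + d w] with [w = a + (y - a) / d] and [|y - a| < d^2]:
   [a] and [w] stay in a ball on which [T] is bounded by [M], and convexity gives
   [T y <= T a + d (T w - T a)]. *)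
Lemma convex_op_le_near (T : X -> X) : convex_op L T -> bounded_op T ->
  forall y (e : R), 0 < e -> exists2 r : R, 0 < r &
    forall a, `|y - a| < r -> exists d, `|d| < e /\ T y <=L T a + d.
Proof.
move=> cT bT y e e0.
have [M bound_M] := bT (`|y| + 2) (ltr_wpDl (normr_ge0 y) (ltr0n _ 2)).
have M0 : 0 <= M.
  by apply: le_trans (normr_ge0 (T 0)) (bound_M 0 _); rewrite normr0 addr_ge0.
pose d := e / (2 * (M + e)).
have Me : 0 < 2 * (M + e) by rewrite mulr_gt0 // ltr_wpDl.
have d0 : 0 < d by rewrite divr_gt0.
have d1 : d < 1 by rewrite ltr_pdivrMr // mul1r mulrDr mulrDl; lra.
have dM : d * (M + M) < e by rewrite mulrC mulrA ltr_pdivrMr // mulrC ltr_pM2l //; lra.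
exists (d * d) => [|a ya]; first by rewrite mulr_gt0.
pose w := a + d^-1 *: (y - a).
have near_a : `|a| <= `|y| + d * d.
  have -> : a = y - (y - a) by rewrite opprB addrC subrK.
  by apply: le_trans (ler_normB _ _) _; rewrite lerD2l ltW.
have norm_a : `|a| <= `|y| + 2 by apply: le_trans near_a _; rewrite lerD2l; nra.
have norm_w : `|w| <= `|y| + 2.
  apply: le_trans (ler_normD _ _) _.
  rewrite normrZ ger0_norm; last by rewrite invr_ge0 ltW.
  have : d^-1 * `|y - a| <= d by rewrite ler_pdivrMl // ltW.
  nra.
exists (d *: (T w - T a)); split.
  rewrite normrZ ger0_norm; last exact: ltW.
  apply: le_lt_trans dM.
  rewrite ler_pM2l //; apply: le_trans (ler_normB _ _) _.
  by apply: lerD; apply: bound_M.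
have dE : 1 - (1 - d) = d by rewrite opprB addrC subrK.
have yE : y = (1 - d) *: a + (1 - (1 - d)) *: w.
  rewrite dE /w scalerDr scalerA mulfV ?gt_eqF // scale1r scalerBl scale1r.
  by rewrite addrA subrK addrC subrK.
have d_01 : 0 <= 1 - d <= 1 by rewrite subr_ge0 ltW //= lerBlDr lerDl ltW.
have := cT (1 - d) a w d_01; rewrite -yE dE => /ble_trans; apply.
have -> : (1 - d) *: T a + d *: T w = T a + d *: (T w - T a).
  by rewrite scalerBl scale1r scalerBr addrAC addrA.
exact: ble_refl.
Qed.

Lemma convex_op_sup_le (T : X -> X) (Y : set X) y u :
  order_continuous L -> convex_op L T -> bounded_op T ->
  (exists a, Y a) -> upward_directed L Y -> is_sup L Y y ->
  (forall a, Y a -> T a <=L u) -> T y <=L u.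
Proof.
move=> oc cT bT neY dirY sup_y Tu; apply: ble_approx => e e0.
have [r r0 near_y] := convex_op_le_near cT bT y e0.
have [a Ya ya] := directed_sup_approx oc neY dirY sup_y r0.
have [d [de Td]] := near_y a ya.
by exists d; split=> //; apply: ble_trans Td (ble_add d (Tu a Ya)).
Qed.

End ConvexOperators.

Section SemigroupEnvelope.
Context {R : realType} {X : completeNormedModType R}.
Variable L : banach_lattice X.
Local Notation "x <=L y" := (ble L x y) (at level 70).
Variables (Lam : Type) (Sl : Lam -> R -> X -> X).
Hypothesis oc : order_continuous L.
Hypothesis inh : inhabited Lam.
Hypothesis Sl_sg : forall l,
  semigroup (Sl l) /\ convex_sg L (Sl l) /\ monotone_sg L (Sl l).
Hypothesis Sl_bounded_above : forall x t, 0 < t ->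
  bounded_above L [set Sl l t x | l in [set: Lam]].

Local Notation J := (Jop L Sl).

Lemma Sl0 l x : Sl l 0 x = x.
Proof. by have [[_ [-> _]] _] := Sl_sg l. Qed.

Lemma SlD l a b x : 0 <= a -> 0 <= b -> Sl l (a + b) x = Sl l a (Sl l b x).
Proof. by have [[_ [_ SD]] _] := Sl_sg l; apply: SD. Qed.

Lemma Sl_bounded l h : 0 <= h -> bounded_op (Sl l h).
Proof. by have [[Sb _] _] := Sl_sg l; apply: Sb. Qed.

Lemma Sl_convex l h : 0 <= h -> convex_op L (Sl l h).
Proof. by have [_ [Sc _]] := Sl_sg l; apply: Sc. Qed.

Lemma Sl_mono l h : 0 <= h -> monotone_op L (Sl l h).
Proof. by have [_ [_ Sm]] := Sl_sg l; apply: Sm. Qed.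

Lemma Jop0 x : J 0 x = x. Proof. by rewrite /Jop eqxx. Qed.

Lemma Jop_sup h x : 0 <= h -> is_sup L [set Sl l h x | l in [set: Lam]] (J h x).
Proof.
rewrite le_eqVlt => /orP[/eqP <-|h0]; last first.
  rewrite /Jop gt_eqF //; apply: lsupP => //; last exact: Sl_bounded_above.
  by case: inh => l; exists (Sl l h x), l.
rewrite Jop0; split=> [_ [l _ <-]|u ub_u]; first by rewrite Sl0; apply: ble_refl.
by case: inh => l; apply: ub_u; exists l; rewrite ?Sl0.
Qed.

Lemma Sl_le_Jop l h x : 0 <= h -> Sl l h x <=L J h x.
Proof. by move=> h0; case: (Jop_sup x h0) => + _; apply; exists l. Qed.

Lemma Jop_le h x u : 0 <= h -> (forall l, Sl l h x <=L u) -> J h x <=L u.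
Proof. by move=> h0 Su; case: (Jop_sup x h0) => _; apply => _ [l _ <-]. Qed.

Lemma Jop_mono h : 0 <= h -> monotone_op L (J h).
Proof.
move=> h0 x y xy; apply: Jop_le => // l.
exact: ble_trans (Sl_mono l h0 xy) (Sl_le_Jop l y h0).
Qed.

Lemma Jop_convex h : 0 <= h -> convex_op L (J h).
Proof.
move=> h0 a x y a01; apply: Jop_le => // l.
apply: ble_trans (Sl_convex l h0 x y a01) _; case/andP: a01 => a0 a1.
by apply: bleD; apply: ble_scale; rewrite ?subr_ge0 //; apply: Sl_le_Jop.
Qed.

Lemma Jop_add_le a b x : 0 <= a -> 0 <= b -> J (a + b) x <=L J a (J b x).
Proof.
move=> a0 b0; apply: Jop_le => [|l]; first exact: addr_ge0.
rewrite SlD //; apply: ble_trans (Sl_mono l a0 (Sl_le_Jop l x b0)) _.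
exact: Sl_le_Jop.
Qed.

(* A partition [0 = t_0 < ... < t_m = t] is handled through its increments
   [h_i = t_i - t_(i-1)]: [J_pi] is then [Jcomp [:: h_1; ...; h_m]]. *)
Definition pos_seq (hs : seq R) := all (fun h => 0 < h) hs.

Definition increments (t : R) (hs : seq R) := pos_seq hs /\ \sum_(h <- hs) h = t.

Definition Jcomp (hs : seq R) (x : X) : X := foldr J x hs.

Lemma pos_seq_sum_ge0 hs : pos_seq hs -> 0 <= \sum_(h <- hs) h.
Proof.
elim: hs => [|h hs IH]; first by rewrite big_nil.
by rewrite big_cons => /andP[h0 /IH]; apply: addr_ge0; apply: ltW.
Qed.

Lemma increments_ge0 t hs : increments t hs -> 0 <= t.
Proof. by case=> hs_pos <-; apply: pos_seq_sum_ge0. Qed.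

Lemma increments0 hs : increments 0 hs -> hs = [::].
Proof.
case: hs => // h hs [/andP[h0 hs_pos]]; rewrite big_cons => sum0.
by have := ltr_pwDl h0 (pos_seq_sum_ge0 hs_pos); rewrite sum0 ltxx.
Qed.

Lemma increments1 t : 0 < t -> increments t [:: t].
Proof. by move=> t0; split; rewrite /= ?t0 // big_seq1. Qed.

Lemma increments_cat t1 t2 hs1 hs2 :
  increments t1 hs1 -> increments t2 hs2 -> increments (t1 + t2) (hs1 ++ hs2).
Proof.
move=> [p1 <-] [p2 <-]; split; last by rewrite big_cat.
by move: p1 p2; rewrite /pos_seq all_cat => -> ->.
Qed.

Lemma Jcomp_cat hs1 hs2 x : Jcomp (hs1 ++ hs2) x = Jcomp hs1 (Jcomp hs2 x).
Proof. exact: foldr_cat. Qed.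

Lemma Jcomp_mono hs : pos_seq hs -> monotone_op L (Jcomp hs).
Proof.
elim: hs => [_ x y //|h hs IH /andP[h0 /IH hs_mono] x y xy].
exact: Jop_mono (ltW h0) _ _ (hs_mono _ _ xy).
Qed.

Lemma Jcomp_convex hs : pos_seq hs -> convex_op L (Jcomp hs).
Proof.
elim: hs => [|h hs IH] /=; first by move=> _ a x y _; apply: ble_refl.
move=> /andP[h0 hs_pos] a x y a01.
apply: ble_trans (Jop_mono (ltW h0) (IH hs_pos a x y a01)) _.
exact: Jop_convex (ltW h0) _ _ _ a01.
Qed.

Lemma Jop_sum_le_Jcomp hs x : pos_seq hs -> J (\sum_(h <- hs) h) x <=L Jcomp hs x.
Proof.
elim: hs x => [|h hs IH] x; first by rewrite big_nil Jop0 => _; apply: ble_refl.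
rewrite big_cons => /andP[h0 hs_pos].
apply: ble_trans (Jop_add_le _ (ltW h0) (pos_seq_sum_ge0 hs_pos)) _.
exact: Jop_mono (ltW h0) _ _ (IH _ hs_pos).
Qed.

Lemma Sl_le_Jcomp l hs x : pos_seq hs -> Sl l (\sum_(h <- hs) h) x <=L Jcomp hs x.
Proof.
elim: hs x => [|h hs IH] x; first by rewrite big_nil Sl0 => _; apply: ble_refl.
rewrite big_cons => /andP[h0 hs_pos]; rewrite SlD ?(ltW h0) ?pos_seq_sum_ge0 //.
apply: ble_trans (Sl_mono l (ltW h0) (IH x hs_pos)) _.
exact: Sl_le_Jop (ltW h0).
Qed.

Lemma Jcomp_le_semigroup (T : R -> X -> X) : semigroup T -> (forall l, sg_le L (Sl l) T) ->
  forall hs x, pos_seq hs -> Jcomp hs x <=L T (\sum_(h <- hs) h) x.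
Proof.
move=> [_ [T0 TD]] Sl_le_T; elim=> [|h hs IH] x.
  by rewrite big_nil T0 => _; apply: ble_refl.
rewrite big_cons => /andP[h0 hs_pos]; rewrite TD ?(ltW h0) ?pos_seq_sum_ge0 //=.
apply: Jop_le (ltW h0) _ => l.
exact: ble_trans (Sl_mono l (ltW h0) (IH x hs_pos)) (Sl_le_T l _ _ (ltW h0)).
Qed.

(* Cutting [[0, t + s]] at [t] splits one increment [h] into [t] and [h - t],
   which can only increase [Jcomp], by [Jop_add_le]. *)
Lemma Jcomp_split hs t s : pos_seq hs -> 0 <= t -> 0 <= s -> \sum_(h <- hs) h = t + s ->
  exists hs1 hs2, [/\ increments t hs1, increments s hs2 &
    forall x, Jcomp hs x <=L Jcomp hs1 (Jcomp hs2 x)].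
Proof.
elim: hs t => [|h hs IH] t hs_pos t0 s0.
  rewrite big_nil => /esym/eqP; rewrite paddr_eq0 // => /andP[/eqP -> /eqP ->].
  by exists [::], [::]; split; rewrite /increments ?big_nil // => x; apply: ble_refl.
move: hs_pos; rewrite big_cons => /andP[h0 hs_pos] sum_ts.
have [t_eq0|t_neq0] := eqVneq t 0.
  rewrite t_eq0 add0r in sum_ts; rewrite t_eq0.
  exists [::], (h :: hs); split=> [||x]; last exact: ble_refl.
    by rewrite /increments big_nil.
  by split; rewrite /= ?h0 // big_cons.
have t_gt0 : 0 < t by rewrite lt_def t_neq0.
have [ht|th] := leP h t.
  have sum_rest : \sum_(h' <- hs) h' = t - h + s by lra.
  have th0 : 0 <= t - h by rewrite subr_ge0.
  have [hs1 [hs2 [[p1 e1] inc2 le12]]] := IH _ hs_pos th0 s0 sum_rest.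
  exists (h :: hs1), hs2; split=> // [|x]; last exact: Jop_mono (ltW h0) _ _ (le12 x).
  by split; rewrite /= ?h0 ?p1 // big_cons e1 addrC subrK.
exists [:: t], (h - t :: hs); split=> [|| x].
- exact: increments1.
- by split; rewrite /= ?subr_gt0 ?th // big_cons addrAC sum_ts [t + s]addrC addrK.
have ht0 : 0 <= h - t by rewrite subr_ge0 ltW.
have := Jop_add_le (Jcomp hs x) (ltW t_gt0) ht0.
by rewrite addrC subrK.
Qed.

Lemma Jcomp_refine t hs hs' : increments t hs -> increments t hs' ->
  exists2 hs'', increments t hs'' &
    forall x, Jcomp hs x <=L Jcomp hs'' x /\ Jcomp hs' x <=L Jcomp hs'' x.
Proof.
elim: hs' t hs => [|h' hs' IH] t hs [hs_pos sum_hs] [hs'_pos sum_hs'].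
  move: sum_hs'; rewrite big_nil => t0; rewrite -t0 in sum_hs *.
  rewrite (increments0 (conj hs_pos sum_hs)); exists [::]; first by split; rewrite ?big_nil.
  by split; apply: ble_refl.
move: hs'_pos sum_hs' => /andP[h0 hs'_pos]; rewrite big_cons => sum_hs'.
have [hs1 [hs2 [[p1 e1] inc2 le12]]] :=
  Jcomp_split hs_pos (ltW h0) (pos_seq_sum_ge0 hs'_pos) (etrans sum_hs (esym sum_hs')).
have [hs3 inc3 le3] := IH _ hs2 inc2 (conj hs'_pos erefl).
exists (hs1 ++ hs3) => [|x]; first by rewrite -sum_hs'; apply: increments_cat.
rewrite Jcomp_cat; split.
  exact: ble_trans (le12 x) (Jcomp_mono p1 (le3 x).1).
apply: ble_trans (Jop_mono (ltW h0) (le3 x).2) _.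
by rewrite -e1; apply: Jop_sum_le_Jcomp.
Qed.


Lemma Jseq_Jcomp prev s : sorted <%R (prev :: s) ->
  exists2 hs, increments (last prev s - prev) hs & forall x, Jseq L Sl prev s x = Jcomp hs x.
Proof.
elim: s prev => [|t s IH] prev /=; first by exists [::]; rewrite /increments ?subrr ?big_nil.
move=> /andP[prev_t sorted_s]; have [hs [hs_pos sum_hs] Jseq_hs] := IH t sorted_s.
exists (t - prev :: hs) => [|x]; last by rewrite /= Jseq_hs.
by split; rewrite /= ?subr_gt0 ?prev_t // big_cons sum_hs; lra.
Qed.

Lemma Jcomp_Jseq prev hs : pos_seq hs ->
  exists s, [/\ sorted <%R (prev :: s), last prev s = prev + \sum_(h <- hs) h &
    forall x, Jseq L Sl prev s x = Jcomp hs x].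
Proof.
elim: hs prev => [|h hs IH] prev; first by exists [::]; rewrite big_nil addr0.
move=> /andP[h0 hs_pos]; have [s [sorted_s last_s Jseq_s]] := IH (prev + h) hs_pos.
exists (prev + h :: s); split=> [||x] /=.
- by rewrite ltrDl h0.
- by rewrite last_s big_cons addrA.
- by rewrite Jseq_s addrC addKr.
Qed.

Lemma Jpart_increments t x :
  [set Jpart L Sl s x | s in in_Pt t] = [set Jcomp hs x | hs in increments t].
Proof.
apply/seteqP; split=> _ [s Ps <-].
  case: Ps => sorted_s last_s; have [hs] := Jseq_Jcomp sorted_s.
  by rewrite last_s subr0 => inc_hs Jseq_hs; exists hs; rewrite ?/Jpart.
case: Ps => hs_pos sum_hs; have [s' [sorted_s' last_s' Jseq_s']] := Jcomp_Jseq 0 hs_pos.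
by exists s'; [split; rewrite ?last_s' ?add0r|rewrite /Jpart].
Qed.


Definition Jset t x := [set Jcomp hs x | hs in increments t].

Definition envelope t x := lsup L (Jset t x).

Lemma Jset_directed t x : upward_directed L (Jset t x).
Proof.
move=> _ _ [hs inc_hs <-] [hs' inc_hs' <-].
have [hs'' inc_hs'' le''] := Jcomp_refine inc_hs inc_hs'.
by exists (Jcomp hs'' x); split; [exists hs''|apply: (le'' x).1|apply: (le'' x).2].
Qed.

Lemma Jset_nonempty t x : 0 <= t -> exists a, Jset t x a.
Proof.
rewrite le_eqVlt => /orP[/eqP <-|t0]; first by exists x, [::]; rewrite /increments ?big_nil.
by exists (Jcomp [:: t] x), [:: t] => //; apply: increments1.
Qed.

Lemma Jop_poshom h a x : (forall l, sublinear_sg L (Sl l)) ->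
  0 <= h -> 0 < a -> J h (a *: x) = a *: J h x.
Proof.
move=> Sl_sub h0 a0; apply: sup_unique (Jop_sup (a *: x) h0) _; split=> [_ [l _ <-]|u ub_u].
  by rewrite (Sl_sub l h h0).2 //; apply: ble_scale (ltW a0) _; apply: Sl_le_Jop.
apply/ble_pscaleV => //; apply: Jop_le => // l; apply/ble_pscaleV => //.
by rewrite -(Sl_sub l h h0).2 //; apply: ub_u; exists l.
Qed.

Lemma Jcomp_poshom hs a x : (forall l, sublinear_sg L (Sl l)) ->
  pos_seq hs -> 0 < a -> Jcomp hs (a *: x) = a *: Jcomp hs x.
Proof.
move=> Sl_sub; elim: hs => [|h hs IH] //= /andP[h0 hs_pos] a0.
by rewrite IH // Jop_poshom // ltW.
Qed.

Section Dominated.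
Variable C : R -> X -> X.
Hypothesis Jcomp_le_C : forall t hs x, increments t hs -> Jcomp hs x <=L C t x.
Hypothesis C_bounded : forall t, 0 <= t -> bounded_op (C t).

Lemma envelope_sup t x : 0 <= t -> is_sup L (Jset t x) (envelope t x).
Proof.
move=> t0; apply: lsupP => //; first exact: Jset_nonempty.
by exists (C t x) => _ [hs inc_hs <-]; apply: Jcomp_le_C.
Qed.

Lemma Jcomp_le_envelope t hs x : increments t hs -> Jcomp hs x <=L envelope t x.
Proof.
by move=> inc_hs; case: (envelope_sup x (increments_ge0 inc_hs)) => + _; apply; exists hs.
Qed.

Lemma envelope_le t x u : 0 <= t ->
  (forall hs, increments t hs -> Jcomp hs x <=L u) -> envelope t x <=L u.
Proof.
by move=> t0 Ju; case: (envelope_sup x t0) => _; apply=> _ [hs inc_hs <-]; apply: Ju.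
Qed.

Lemma envelope0 x : envelope 0 x = x.
Proof.
apply: lsupE; split=> [_ [hs /increments0 -> <-]|u ub_u]; first exact: ble_refl.
by apply: ub_u; exists [::]; rewrite /increments ?big_nil.
Qed.

Lemma Sl_le_envelope l t x : 0 <= t -> Sl l t x <=L envelope t x.
Proof.
rewrite le_eqVlt => /orP[/eqP <-|t0]; first by rewrite Sl0 envelope0; apply: ble_refl.
apply: ble_trans _ (Jcomp_le_envelope x (increments1 t0)).
by have := Sl_le_Jcomp l x (increments1 t0).1; rewrite big_seq1.
Qed.

Lemma envelope_le_C t x : 0 <= t -> envelope t x <=L C t x.
Proof. by move=> t0; apply: envelope_le => // hs /Jcomp_le_C. Qed.

Lemma Jcomp_bounded t hs : increments t hs -> bounded_op (Jcomp hs).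
Proof.
move=> inc_hs; have t0 := increments_ge0 inc_hs; case: inh => l.
apply: bounded_op_between (Sl_bounded l t0) (C_bounded t0) _ _ => x.
  by case: inc_hs => hs_pos <-; apply: Sl_le_Jcomp.
exact: ble_trans (Jcomp_le_envelope x inc_hs) (envelope_le_C x t0).
Qed.

Lemma envelope_bounded t : 0 <= t -> bounded_op (envelope t).
Proof.
move=> t0; case: inh => l.
apply: bounded_op_between (Sl_bounded l t0) (C_bounded t0) _ _ => x.
  exact: Sl_le_envelope.
exact: envelope_le_C.
Qed.

(* [<=]: cut partitions of [[0, t + s]] at [t].  [>=]: [Jcomp hs1] is convex and
   bounded, so it passes through the directed supremum defining [envelope s x]. *)
Lemma envelopeD t s x : 0 <= t -> 0 <= s -> envelope (t + s) x = envelope t (envelope s x).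
Proof.
move=> t0 s0; apply: ble_anti.
  apply: envelope_le => [|hs [hs_pos sum_hs]]; first exact: addr_ge0.
  have [hs1 [hs2 [inc1 inc2 le12]]] := Jcomp_split hs_pos t0 s0 sum_hs.
  apply: ble_trans (le12 x) (ble_trans _ (Jcomp_le_envelope _ inc1)).
  exact: Jcomp_mono inc1.1 _ _ (Jcomp_le_envelope x inc2).
apply: envelope_le => // hs1 inc1.
apply: (convex_op_sup_le oc (Jcomp_convex inc1.1) (Jcomp_bounded inc1)
  (Jset_nonempty x s0) (@Jset_directed s x) (envelope_sup x s0)).
move=> _ [hs2 inc2 <-]; rewrite -Jcomp_cat.
exact/Jcomp_le_envelope/increments_cat.
Qed.

Lemma envelope_semigroup : semigroup envelope.
Proof. by split; [exact: envelope_bounded|split; [exact: envelope0|exact: envelopeD]]. Qed.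

Lemma envelope_convex : convex_sg L envelope.
Proof.
move=> t t0 a x y a01; apply: envelope_le => // hs inc_hs.
apply: ble_trans (Jcomp_convex inc_hs.1 x y a01) _; case/andP: a01 => a0 a1.
by apply: bleD; apply: ble_scale; rewrite ?subr_ge0 //; apply: Jcomp_le_envelope.
Qed.

Lemma envelope_mono : monotone_sg L envelope.
Proof.
move=> t t0 x y xy; apply: envelope_le => // hs inc_hs.
exact: ble_trans (Jcomp_mono inc_hs.1 xy) (Jcomp_le_envelope y inc_hs).
Qed.

Lemma envelope_is_envelope : is_envelope L Sl envelope.
Proof.
split=> [|T [T_sg Sl_le_T] t x t0].
  by split=> [|l t x t0]; [exact: envelope_semigroup|exact: Sl_le_envelope].
apply: envelope_le => // hs [hs_pos <-].
exact: Jcomp_le_semigroup.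
Qed.

Lemma envelope_poshom t a x : (forall l, sublinear_sg L (Sl l)) ->
  0 <= t -> 0 < a -> envelope t (a *: x) = a *: envelope t x.
Proof.
move=> Sl_sub t0 a0; apply: sup_unique (envelope_sup (a *: x) t0) _.
split=> [_ [hs inc_hs <-]|u ub_u].
  rewrite Jcomp_poshom //; last exact: inc_hs.1.
  by apply: ble_scale (ltW a0) _; apply: Jcomp_le_envelope.
apply/ble_pscaleV => //; apply: envelope_le => // hs inc_hs; apply/ble_pscaleV => //.
by rewrite -Jcomp_poshom //; [apply: ub_u; exists hs|exact: inc_hs.1].
Qed.

Lemma envelope_C0 : (forall x, (fun t => C t x) @ 0^'+ --> x) ->
  (exists l0, C0_semigroup (Sl l0)) -> C0_semigroup envelope.
Proof.
move=> C_cont [l0 [_ Sl0_cont]]; split=> [|x]; first exact: envelope_semigroup.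
apply/cvgrPdist_lt => e e0; have e2 : 0 < e / 2 by rewrite divr_gt0.
have /cvgrPdist_lt/(_ _ e2) Sl0_near := Sl0_cont x.
have /cvgrPdist_lt/(_ _ e2) C_near := C_cont x.
near=> t; have t0 : 0 < t by near: t; exact: nbhs_right_gt.
rewrite distrC; have := norm_ble_between (ble_add (- x) (Sl_le_envelope l0 x (ltW t0)))
                         (ble_add (- x) (envelope_le_C x (ltW t0))).
move/le_lt_trans; apply; rewrite (splitr e) (distrC (Sl l0 t x)) (distrC (C t x)).
by apply: ltrD; near: t.
Unshelve. all: by end_near.
Qed.

End Dominated.

End SemigroupEnvelope.
Theorem theorem4p2 (R : realType) (X : completeNormedModType R)
  (L : banach_lattice X) (Lam : Type) (Sl : Lam -> R -> X -> X) (C : R -> X -> X) :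
  order_continuous L ->
  inhabited Lam ->
  (forall l, semigroup (Sl l) /\ convex_sg L (Sl l) /\ monotone_sg L (Sl l)) ->
  (forall x t, 0 < t -> bounded_above L [set Sl l t x | l in [set: Lam]]) ->
  (forall t, 0 <= t -> bounded_op (C t) /\
     forall s x, in_Pt t s -> ble L (Jpart L Sl s x) (C t x)) ->
  exists S : R -> X -> X,
    [/\ is_envelope L Sl S,
        semigroup S /\ convex_sg L S /\ monotone_sg L S,
        (forall t x, 0 <= t ->
           is_sup L [set Jpart L Sl s x | s in in_Pt t] (S t x)),
        ((forall x, (fun t => C t x) @ 0^'+ --> x) ->
         (exists l0, C0_semigroup (Sl l0)) -> C0_semigroup S)
      & ((forall l, sublinear_sg L (Sl l)) -> sublinear_sg L S)].
Proof.
move=> oc inh Sl_sg Sl_bounded_above hC.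
have C_bounded t : 0 <= t -> bounded_op (C t) by move=> /hC[].
have Jcomp_le_C t hs x : increments t hs -> ble L (Jcomp L Sl hs x) (C t x).
  move=> inc_hs; have [s Ps <-] : [set Jpart L Sl s x | s in in_Pt t] (Jcomp L Sl hs x).
    by rewrite Jpart_increments; exists hs.
  exact: (hC t (increments_ge0 inc_hs)).2.
have env_sg := envelope_semigroup oc inh Sl_sg Sl_bounded_above Jcomp_le_C C_bounded.
have env_convex := envelope_convex oc inh Sl_sg Sl_bounded_above Jcomp_le_C.
have env_mono := envelope_mono oc inh Sl_sg Sl_bounded_above Jcomp_le_C.
exists (envelope L Sl); split=> //.
- exact: (envelope_is_envelope oc inh Sl_sg Sl_bounded_above Jcomp_le_C C_bounded).
- by move=> t x t0; rewrite Jpart_increments; apply: (envelope_sup oc Jcomp_le_C).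
- exact: (envelope_C0 oc inh Sl_sg Sl_bounded_above Jcomp_le_C C_bounded).
- move=> Sl_sub t t0; split=> [|a x a0]; first exact: env_convex.
  by apply: (envelope_poshom oc inh Sl_sg Sl_bounded_above Jcomp_le_C).
Qed.
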